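(* Let $\Omega$ be any norm on $\mathbb{R}^k$ with dual norm $\Omega_*$, let $-1=x_1<\cdots<x_n=1$ be real numbers, and let $U_X=\{-1,1\}\times\{x_1,\ldots,x_n\}$. Suppose $\alpha_1,\ldots,\alpha_n\in\mathbb{R}^k$ satisfy $$\Omega_*\Big(\sum_{i=1}^n\alpha_i\phi_u(x_i)\Big)\le 1\quad\forall u\in U_X.$$ Then $\Omega_*\big(\sum_{i=1}^n\alpha_i\phi_u(x_i)\big)\le 1$ for all $u\in\mathbb{U}$; i.e., $\alpha_1,\ldots,\alpha_n$ are feasible for the dual problem $$\sup_{\alpha_1,\ldots,\alpha_n\in\mathbb{R}^k}\ -\sum_{i=1}^n\sigma_{S_i}(\alpha_i)\quad\text{subject to}\quad \Omega_*\Big(\sum_{i=1}^n\alpha_i\phi_u(x_i)\Big)\le 1\ \ \forall u\in\mathbb{U}$$ (for any non-empty closed convex sets $S_1,\ldots,S_n\subseteq\mathbb{R}^k$).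
   Context: Let $\mathbb{U}=\{-1,1\}\times[-1,1]$. For $u=(s,c)\in\mathbb{U}$ and $x\in\mathbb{R}$ let $\phi_u(x)=(s(x-c))_+$, where $(t)_+=\max(t,0)$. $\Omega_*(z)=\sup_{\Omega(v)\le1}\langle v,z\rangle$ is the dual norm. For a convex set $S$, $\sigma_S(y)=\sup_{w\in S}w^Ty$ is its support function. *)

From mathcomp Require Import all_boot all_order all_algebra.
From mathcomp Require Import classical_sets reals.
Set Implicit Arguments. Unset Strict Implicit. Unset Printing Implicit Defensive.
Import Order.TTheory GRing.Theory Num.Theory.
Local Open Scope ring_scope.
Local Open Scope classical_set_scope.

Definition dotv (R : realType) (k : nat) (v z : 'rV[R]_k) : R :=
  \sum_(j < k) v 0 j * z 0 j.

Definition is_norm (R : realType) (k : nat) (Omega : 'rV[R]_k -> R) : Prop :=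
  [/\ forall v, 0 <= Omega v,
      forall v, Omega v = 0 -> v = 0,
      forall (a : R) v, Omega (a *: v) = `|a| * Omega v &
      forall v w, Omega (v + w) <= Omega v + Omega w].

Definition dual_norm (R : realType) (k : nat) (Omega : 'rV[R]_k -> R)
  (z : 'rV[R]_k) : R :=
  sup [set r : R | exists v, Omega v <= 1 /\ r = dotv v z].

(* phi_u(x) = (s (x - c))_+ for u = (s, c). *)
Definition phi (R : realType) (s c x : R) : R := Num.max (s * (x - c)) 0.

Definition inU (R : realType) (s c : R) : Prop :=
  (s = 1 \/ s = -1) /\ -1 <= c <= 1.

Definition comb (R : realType) (k n : nat) (alpha : 'I_n -> 'rV[R]_k)
  (x : 'I_n -> R) (s c : R) : 'rV[R]_k :=
  \sum_(i < n) phi s c (x i) *: alpha i.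

(* For fixed s, the hinge functions c |-> phi_(s,c)(x_i) have their kinks at the
   nodes, so c |-> sum_i phi_(s,c)(x_i) alpha_i is affine between two consecutive
   nodes: its value at c is a convex combination of its values at the neighbouring
   nodes, where the constraint holds by hypothesis.  The dual unit ball being
   convex, the constraint holds at c.  That convexity needs Omega_* to be a genuine
   supremum of a bounded set, i.e. the Omega-unit ball to be bounded; this is the
   equivalence of Omega with the max norm, obtained by minimizing the continuous
   Omega on the compact unit sphere. *)

From mathcomp Require Import all_boot all_order all_algebra.
From mathcomp Require Import boolp classical_sets reals topology normedtype derive.
From mathcomp Require Import ring lra.
Set Implicit Arguments. Unset Strict Implicit. Unset Printing Implicit Defensive.
Import Order.TTheory GRing.Theory Num.Theory.
Import numFieldNormedType.Exports.
Local Open Scope ring_scope.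
Local Open Scope classical_set_scope.

Lemma mx_norm_entry_le (R : realType) (k : nat) (v : 'rV[R]_k) (j : 'I_k) :
  `|v 0 j| <= `|v|.
Proof. by rewrite [leRHS]/Num.norm /= mx_normrE; apply/bigmax_geP; right; exists (0, j). Qed.

Section Dotv.
Variables (R : realType) (k : nat).
Implicit Types v z : 'rV[R]_k.

Lemma dotvD v z1 z2 : dotv v (z1 + z2) = dotv v z1 + dotv v z2.
Proof. by rewrite /dotv -big_split; apply: eq_bigr => j _; rewrite mxE mulrDr. Qed.

Lemma dotvZ v a z : dotv v (a *: z) = a * dotv v z.
Proof. by rewrite /dotv mulr_sumr; apply: eq_bigr => j _; rewrite mxE mulrCA. Qed.

Lemma ler_norm_dotv v z : `|dotv v z| <= `|v| * \sum_(j < k) `|z 0 j|.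
Proof.
rewrite /dotv mulr_sumr; apply: le_trans (ler_norm_sum _ _ _) _.
by apply: ler_sum => j _; rewrite normrM ler_wpM2r ?mx_norm_entry_le.
Qed.

End Dotv.

Section NormOnRows.
Variables (R : realType) (k : nat) (Omega : 'rV[R]_k -> R).
Hypothesis normO : is_norm Omega.

Lemma Omega_ge0 v : 0 <= Omega v.
Proof. by case: normO. Qed.

Lemma Omega_eq0 v : Omega v = 0 -> v = 0.
Proof. by case: normO => _ + _ _; apply. Qed.

Lemma OmegaZ a v : Omega (a *: v) = `|a| * Omega v.
Proof. by case: normO. Qed.

Lemma ler_OmegaD v w : Omega (v + w) <= Omega v + Omega w.
Proof. by case: normO. Qed.

Lemma Omega0 : Omega 0 = 0.
Proof. by rewrite -(scale0r (0 : 'rV[R]_k)) OmegaZ normr0 mul0r. Qed.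

Lemma OmegaN v : Omega (- v) = Omega v.
Proof. by rewrite -scaleN1r OmegaZ normrN normr1 mul1r. Qed.

Lemma ler_Omega_sum (I : Type) (r : seq I) (F : I -> 'rV[R]_k) :
  Omega (\sum_(i <- r) F i) <= \sum_(i <- r) Omega (F i).
Proof.
elim: r => [|a r IH]; first by rewrite !big_nil Omega0.
by rewrite !big_cons; apply: le_trans (ler_OmegaD _ _) _; apply: lerD.
Qed.

Lemma ler_dist_Omega v w : `|Omega v - Omega w| <= Omega (v - w).
Proof.
have le_sub u u' : Omega u - Omega u' <= Omega (u - u').
  by rewrite lerBlDr; apply: le_trans (ler_OmegaD _ _); rewrite subrK.
by rewrite ler_norml le_sub andbT lerNl opprB -(OmegaN (v - w)) opprB le_sub.
Qed.

Lemma Omega_le_norm : exists2 M, 0 < M & forall v, Omega v <= M * `|v|.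
Proof.
exists (1 + \sum_(j < k) Omega 'e_j) => [|v].
  by rewrite ltr_pwDl // sumr_ge0 // => j _; apply: Omega_ge0.
rewrite {1}(row_sum_delta v); apply: le_trans (ler_Omega_sum _ _) _.
apply: (@le_trans _ _ ((\sum_(j < k) Omega 'e_j) * `|v|)); last first.
  by rewrite ler_wpM2r // lerDr.
rewrite mulr_suml; apply: ler_sum => j _.
by rewrite OmegaZ mulrC ler_wpM2l ?Omega_ge0 ?mx_norm_entry_le.
Qed.

Lemma continuous_Omega : continuous Omega.
Proof.
have [M M0 leOM] := Omega_le_norm.
move=> v; apply/(@cvgrPdist_lt _ R^o _ _ (nbhs_filter v)) => e e0; near=> w.
apply: le_lt_trans (ler_dist_Omega v w) _; apply: le_lt_trans (leOM _) _.
rewrite -ltr_pdivlMl //; near: w.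
by apply: (@cvgr_dist_lt _ _ _ _ (nbhs_filter v) id v cvg_id); rewrite mulr_gt0 ?invr_gt0.
Unshelve. all: end_near.
Qed.

Lemma Omega_ge_norm : exists2 m, 0 < m & forall v, m * `|v| <= Omega v.
Proof.
pose S := [set v : 'rV[R]_k | `|v| = 1].
have normalize v : v != 0 -> S (`|v|^-1 *: v).
  by move=> v0; rewrite /S /= normrZ normfV normr_id mulVf // normr_eq0.
have [[u Su]|S0] := pselect (S !=set0); last first.
  (* only for k = 0 *)
  exists 1 => // v; have [->|v0] := eqVneq v 0; first by rewrite normr0 mulr0 Omega0.
  by case: S0; exists (`|v|^-1 *: v); apply: normalize.
have S_compact : compact S.
  apply: bounded_closed_compact.
    by exists 1; split=> // M M1 v /= ->; apply: ltW.
  rewrite (_ : S = Num.norm @^-1` [set 1]) //.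
  by apply: preimage_closed; [move=> w _; apply: norm_continuous | apply: closed_eq].
have [c /set_mem Sc cmin] := compact_EVT_min (ex_intro _ u Su) S_compact
  (continuous_subspaceT continuous_Omega).
have c0 : c != 0.
  by apply/eqP => c0; move: Sc; rewrite /S /= c0 normr0 => /esym/eqP; rewrite oner_eq0.
exists (Omega c) => [|v].
  by rewrite lt_def Omega_ge0 andbT; apply: contra c0 => /eqP/Omega_eq0 ->.
have [->|v0] := eqVneq v 0; first by rewrite normr0 mulr0 Omega0.
have := cmin _ (mem_set (normalize _ v0)).
by rewrite OmegaZ normfV normr_id ler_pdivlMl ?normr_gt0 // mulrC.
Qed.

Let dual_set z := [set r : R | exists v, Omega v <= 1 /\ r = dotv v z].

Lemma has_sup_dual_set z : has_sup (dual_set z).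
Proof.
split; first by exists (dotv 0 z), 0; rewrite Omega0.
have [m m0 leOm] := Omega_ge_norm.
exists (m^-1 * \sum_(j < k) `|z 0 j|) => _ [v [Ov1 ->]].
apply: le_trans (ler_norm _) (le_trans (ler_norm_dotv v z) _).
apply: ler_wpM2r; first by apply: sumr_ge0.
by rewrite -(ler_pM2l m0) mulfV ?gt_eqF // (le_trans (leOm v)).
Qed.

Lemma dotv_le_dual_norm z v : Omega v <= 1 -> dotv v z <= dual_norm Omega z.
Proof. by move=> Ov1; apply: (sup_upper_bound (has_sup_dual_set z)); exists v. Qed.

Lemma dual_norm_le1_convex z1 z2 t : 0 <= t <= 1 ->
  dual_norm Omega z1 <= 1 -> dual_norm Omega z2 <= 1 ->
  dual_norm Omega (t *: z1 + (1 - t) *: z2) <= 1.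
Proof.
move=> /andP[t0 t1] z1_le1 z2_le1.
apply: ge_sup => [|_ [v [Ov1 ->]]]; first exact: (has_sup_dual_set _).1.
have := le_trans (dotv_le_dual_norm z1 Ov1) z1_le1.
have := le_trans (dotv_le_dual_norm z2 Ov1) z2_le1.
rewrite dotvD !dotvZ; nra.
Qed.

End NormOnRows.

Lemma phi_convex_comb (R : realType) (s a b y t : R) :
  (s = 1 \/ s = -1) -> a <= b -> (y <= a \/ b <= y) -> 0 <= t <= 1 ->
  phi s (t * a + (1 - t) * b) y = t * phi s a y + (1 - t) * phi s b y.
Proof.
move=> hs ab hy /andP[t0 t1].
have same_sign : (0 <= s * (y - a) /\ 0 <= s * (y - b))
              \/ (s * (y - a) <= 0 /\ s * (y - b) <= 0).
  by case: hs hy => -> [] ?; [right | left | left | right]; split; lra.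
rewrite /phi; case: same_sign => [[ya yb] | [ya yb]].
- rewrite (max_l ya) (max_l yb) max_l; [ring | nra].
- rewrite (max_r ya) (max_r yb) max_r; [ring | nra].
Qed.

Lemma comb_convex_comb (R : realType) (k n : nat) (alpha : 'I_n -> 'rV[R]_k)
    (x : 'I_n -> R) (s a b t : R) :
  (s = 1 \/ s = -1) -> a <= b -> (forall i, x i <= a \/ b <= x i) -> 0 <= t <= 1 ->
  comb alpha x s (t * a + (1 - t) * b)
  = t *: comb alpha x s a + (1 - t) *: comb alpha x s b.
Proof.
move=> hs ab hx ht; rewrite /comb !scaler_sumr -big_split; apply: eq_bigr => i _.
by rewrite phi_convex_comb // scalerDl !scalerA.
Qed.

Lemma exists_bracket (R : realType) (I : finType) (x : I -> R) (c : R) (i0 j0 : I) :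
  x i0 <= c -> c <= x j0 ->
  exists i j, [/\ x i <= c, c <= x j & forall l, x l <= x i \/ x j <= x l].
Proof.
move=> xi0c cxj0.
case: (arg_maxP x (xi0c : (fun l => x l <= c) i0)) => i xic maxi.
case: (arg_minP x (cxj0 : (fun l => c <= x l) j0)) => j cxj minj.
exists i, j; split => // l; have [xlc | cxl] := leP (x l) c.
- by left; apply: maxi.
- by right; apply/minj/ltW.
Qed.

Theorem lemma2 (R : realType) (k n : nat) (Omega : 'rV[R]_k -> R)
  (x : 'I_n -> R) (alpha : 'I_n -> 'rV[R]_k) :
  is_norm Omega ->
  (0 < n)%N ->
  (forall i j : 'I_n, (i < j)%N -> x i < x j) ->
  (forall i : 'I_n, val i = 0%N -> x i = -1) ->
  (forall i : 'I_n, val i = n.-1 -> x i = 1) ->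
  (forall (s : R) (i : 'I_n), (s = 1 \/ s = -1) ->
     dual_norm Omega (comb alpha x s (x i)) <= 1) ->
  forall s c : R, inU s c -> dual_norm Omega (comb alpha x s c) <= 1.
Proof.
(* The nodes need not be sorted: only x_1 = -1 and x_n = 1 are used. *)
move=> normO n_gt0 _ x_first x_last feasible s c [hs /andP[c_ge c_le]].
have last_lt : (n.-1 < n)%N by rewrite ltn_predL.
have x_first_le : x (Ordinal n_gt0) <= c by rewrite x_first.
have x_last_ge : c <= x (Ordinal last_lt) by rewrite x_last.
have [i [j [xic cxj gap]]] := exists_bracket x_first_le x_last_ge.
have [xij | xij] := eqVneq (x i) (x j).
  have -> : c = x i by lra.
  exact: feasible.
pose t := (x j - c) / (x j - x i).
have -> : c = t * x i + (1 - t) * x j by rewrite /t; field; rewrite subr_eq0 eq_sym.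
have xi_lt_xj : x i < x j by rewrite lt_neqAle xij (le_trans xic).
have t01 : 0 <= t <= 1.
  by apply/andP; split; rewrite /t; [apply: divr_ge0 | rewrite ler_pdivrMr ?mul1r]; lra.
rewrite comb_convex_comb ?(ltW xi_lt_xj) //.
by apply: (dual_norm_le1_convex normO); rewrite ?feasible.
Qed.
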